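(* Let $N,W$ be positive integers and let $P$ be a nonzero polynomial of degree at most $N$ with integer coefficients of absolute value at most $W$. If $1$ is a root of $P$ of order $k$, then \[k\le\left\lfloor\frac{16}{7}W^{1/4}\sqrt{N}\right\rfloor+4.\]
   Context: A number $\alpha$ is a root of $P$ of order $k$ if $P(x)=Q(x)(x-\alpha)^k$ for some polynomial $Q$ with $Q(\alpha)\neq0$. *)

From HB Require Import structures.
From mathcomp Require Import all_boot all_order all_algebra.
From mathcomp Require Import reals.
Set Implicit Arguments. Unset Strict Implicit. Unset Printing Implicit Defensive.
Import Order.TTheory GRing.Theory Num.Theory.
Local Open Scope ring_scope.

Definition root_of_order {R : nzRingType} (P : {poly R}) (alpha : R) (k : nat) : Prop :=
  exists Q : {poly R}, P = Q * ('X - alpha%:P) ^+ k /\ Q.[alpha] != 0.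

From mathcomp Require Import all_boot all_order all_algebra.
From mathcomp Require Import reals.
From mathcomp Require Import ring lra zify.
Import Order.TTheory GRing.Theory Num.Theory.
Local Open Scope ring_scope.

(* Write P = A (X - 1)^k.  Multiplying by X - 1 turns the pairing
   <P, p> = sum_i P_i p(i) into <P, p(X + 1) - p>, so <P, p> = 0 whenever
   deg p < k.  Let v be the index of the lowest nonzero coefficient of P and
   m = (k + 1)/2.  With T_m the Chebyshev polynomial, F = (1 - T_m) / (1 - X)
   has degree m - 1, F(1) = m^2 and |F(y) (1 - y)| <= 2 on [-1, 1], so the test
   polynomial p = F(1 - 2 (X - v) / N)^2 has degree < k, p(v) = m^4 and
   p(i) <= N^2 / (i - v)^2 for v < i <= N.  Isolating the v-th term of
   <P, p> = 0, where |P_v| >= 1 as P has integer coefficients, gives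
   m^4 <= W N^2 sum_(j >= 1) 1/j^2 <= (61/36) W N^2, and
   61/36 < (8/7)^4 turns this into the bound on k. *)

Lemma leq_size_polyM {R : nzSemiRingType} [p q : {poly R}] [m n : nat] :
  (size p <= m)%N -> (size q <= n)%N -> (size (p * q)%R <= (m + n).-1)%N.
Proof.
by move=> sp sq; rewrite (leq_trans (size_polyMleq _ _)) // -!subn1 leq_sub2r ?leq_add.
Qed.

Lemma leq_size_polyD {R : nzSemiRingType} [p q : {poly R}] [n : nat] :
  (size p <= n)%N -> (size q <= n)%N -> (size (p + q)%R <= n)%N.
Proof. by move=> sp sq; rewrite (leq_trans (size_polyD _ _)) // geq_max sp. Qed.

Section Chebyshev.
Context {R : comNzRingType}.

Fixpoint cheb_pair (n : nat) : {poly R} * {poly R} :=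
  if n is n'.+1 then
    let: (t, u) := cheb_pair n' in ('X * t - (1 - 'X ^+ 2) * u, t + 'X * u)
  else (1, 0).

(* chebU n is the Chebyshev polynomial of the second kind of index n - 1. *)
Definition chebT n := (cheb_pair n).1.
Definition chebU n := (cheb_pair n).2.

Lemma chebTS n : chebT n.+1 = 'X * chebT n - (1 - 'X ^+ 2) * chebU n.
Proof. by rewrite /chebT /chebU /=; case: cheb_pair. Qed.
Lemma chebUS n : chebU n.+1 = chebT n + 'X * chebU n.
Proof. by rewrite /chebT /chebU /=; case: cheb_pair. Qed.

Lemma cheb_pell n : chebT n ^+ 2 + (1 - 'X ^+ 2) * chebU n ^+ 2 = 1.
Proof.
elim: n => [|n IHn]; first by rewrite /chebT /chebU /= expr1n expr0n mulr0 addr0.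
by rewrite chebTS chebUS -[RHS]IHn; ring.
Qed.

Lemma horner_cheb_1 n : (chebT n).[1] = 1 /\ (chebU n).[1] = n%:R.
Proof.
elim: n => [|n [IHT IHU]]; first by rewrite /chebT /chebU /= hornerC horner0.
rewrite chebTS chebUS !hornerE IHT IHU; split; [ring | rewrite mulrS; ring].
Qed.

Lemma size_cheb n : (size (chebT n) <= n.+1)%N /\ (size (chebU n) <= n)%N.
Proof.
elim: n => [|n [IHT IHU]]; first by rewrite /chebT /chebU /= size_poly1 size_poly0.
have sX : size ('X : {poly R}) = 2 by rewrite size_polyX.
have sX2 : (size (1 - 'X ^+ 2 : {poly R})%R <= 3)%N.
  by rewrite leq_size_polyD ?size_polyN ?size_polyXn ?size_poly1.
rewrite chebTS chebUS; split; apply: leq_size_polyD.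
- exact: leq_trans (leq_size_polyM (eq_leq sX) IHT) _.
- by rewrite size_polyN; exact: leq_trans (leq_size_polyM sX2 IHU) _.
- exact: leq_trans IHT _.
- exact: leq_trans (leq_size_polyM (eq_leq sX) IHU) _.
Qed.

Definition cheb_sum m := \sum_(j < m) (chebT j + (1 + 'X) * chebU j).

Lemma mul_1subX_cheb_sum m : (1 - 'X) * cheb_sum m = 1 - chebT m.
Proof.
elim: m => [|m IHm]; first by rewrite /cheb_sum big_ord0 mulr0 /chebT /= subrr.
by rewrite /cheb_sum big_ord_recr /= mulrDr IHm chebTS; ring.
Qed.

Lemma cheb_sum_1 m : (cheb_sum m).[1] = m%:R ^+ 2.
Proof.
elim: m => [|m IHm]; first by rewrite /cheb_sum big_ord0 horner0 expr0n.
have [T1 U1] := horner_cheb_1 m.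
by rewrite /cheb_sum big_ord_recr /= hornerD IHm !hornerE T1 U1 mulrS /=; ring.
Qed.

Lemma size_cheb_sum m : (size (cheb_sum m) <= m)%N.
Proof.
apply: (big_ind (fun p : {poly R} => size p <= m)%N); rewrite ?size_poly0 //.
  by move=> p q; apply: leq_size_polyD.
move=> j _; have [sT sU] := size_cheb j.
apply: leq_size_polyD; first exact: leq_trans sT (ltn_ord j).
have s1X : (size (1 + 'X : {poly R})%R <= 2)%N.
  by rewrite leq_size_polyD ?size_polyX ?size_poly1.
exact: leq_trans (leq_size_polyM s1X sU) (ltn_ord j).
Qed.

End Chebyshev.

Section ChebyshevBound.
Context {R : realFieldType}.

Lemma cheb_sum_bound m (y : R) : -1 <= y <= 1 ->
  ((cheb_sum m).[y] * (1 - y)) ^+ 2 <= 4.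
Proof.
move=> /andP[ge_y1 le_y1].
have := congr1 (horner^~ y) (mul_1subX_cheb_sum (R:=R) m).
have := congr1 (horner^~ y) (cheb_pell (R:=R) m).
rewrite /= !(hornerD, hornerN, hornerM, horner_exp, hornerX, hornerC).
set f := (cheb_sum m).[y]; set t := (chebT m).[y]; set u := (chebU m).[y].
move=> pell_y sum_y.
have t2_le1 : t ^+ 2 <= 1.
  by rewrite -pell_y lerDl mulr_ge0 ?sqr_ge0 // subr_ge0; nra.
have -> : f * (1 - y) = 1 - t by rewrite -sum_y mulrC.
nra.
Qed.

Lemma cheb_sum_sqr_le m (s : R) : 0 < s <= 2 ->
  (cheb_sum m).[1 - s] ^+ 2 <= 4 / s ^+ 2.
Proof.
move=> /andP[s_gt0 s_le2].
have := cheb_sum_bound m (1 - s).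
have -> : 1 - (1 - s) = s by ring.
rewrite exprMn -ler_pdivlMr ?exprn_gt0 //; apply; lra.
Qed.

End ChebyshevBound.

Section CoefPairing.
Context {R : idomainType}.

Definition forward_diff (p : {poly R}) := p \Po ('X + 1%:P) - p.

Lemma horner_forward_diff (p : {poly R}) x : (forward_diff p).[x] = p.[x + 1] - p.[x].
Proof. by rewrite /forward_diff hornerD hornerN horner_comp !hornerE. Qed.

Lemma size_forward_diff (p : {poly R}) n :
  (size p <= n.+1)%N -> (size (forward_diff p) <= n)%N.
Proof.
move=> sp; have sX1 : size ('X + 1%:P : {poly R}) = 2 by rewrite size_XaddC.
have size_comp : size (p \Po ('X + 1%:P)) = size p by rewrite size_comp_poly2.
apply/leq_sizeP => j le_nj; rewrite coefB.
have [le_pj | lt_jp] := leqP (size p) j; first by rewrite !nth_default ?size_comp // subrr.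
have j_eq : j = (size p).-1 by lia.
have := lead_coef_comp p (q := 'X + 1%:P); rewrite sX1 => /(_ isT).
by rewrite lead_coefXaddC expr1n mulr1 /lead_coef size_comp -j_eq => ->; rewrite subrr.
Qed.

Definition coef_pairing n (P p : {poly R}) := \sum_(i < n) P`_i * p.[i%:R].

Lemma coef_pairing_mulXsubC n (A p : {poly R}) : (size A <= n)%N ->
  coef_pairing n.+1 (A * ('X - 1%:P)) p = coef_pairing n A (forward_diff p).
Proof.
move=> sA; rewrite /coef_pairing.
under eq_bigr do rewrite mulrBr polyC1 mulr1 coefB mulrBl.
rewrite sumrB big_ord_recl big_ord_recr /= coefMX eqxx mul0r add0r.
rewrite (nth_default _ sA) mul0r addr0 -sumrB; apply: eq_bigr => i _.
by rewrite coefMX /= horner_forward_diff -natr1 mulrBr.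
Qed.

Lemma coef_pairing_mulXsubC_exp k n (A p : {poly R}) :
  (size A <= n)%N -> (size p <= k)%N ->
  coef_pairing (n + k) (A * ('X - 1%:P) ^+ k) p = 0.
Proof.
elim: k n A p => [|k IHk] n A p sA sp.
  move: sp; rewrite leqn0 size_poly_eq0 => /eqP ->.
  by rewrite /coef_pairing big1 // => i _; rewrite horner0 mulr0.
rewrite exprSr mulrA addnS coef_pairing_mulXsubC; last first.
  by rewrite (leq_trans (size_polyMleq _ _)) // size_exp_XsubC addnS leq_add2r.
exact/IHk/size_forward_diff.
Qed.

End CoefPairing.

Section InverseSquareSum.
Context {R : realFieldType}.

Lemma sum_inv_sqr_le n :
  \sum_(i < n.+4) (i%:R ^+ 2)^-1 <= 61 / 36 - (n.+3)%:R^-1 :> R.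
Proof.
elim: n => [|n IHn].
  rewrite !big_ord_recr big_ord0 /= expr0n invr0.
  by rewrite le_eqVlt; apply/orP; left; apply/eqP; field.
rewrite big_ord_recr /= (le_trans (lerD IHn (lexx _))) //.
have n3_gt0 : 0 < (n.+3)%:R :> R by rewrite ltr0n.
rewrite -(natr1 n.+3) -exprVn.
set a := (_ + 1)^-1; set b := (n.+3)%:R^-1.
have a_gt0 : 0 < a by rewrite invr_gt0; lra.
have b_gt0 : 0 < b by rewrite invr_gt0.
have b_sub_a : b - a = a * b by rewrite /a /b; field; rewrite !lt0r_neq0 //; lra.
nra.
Qed.

(* The terms with i <= v vanish: i - v is truncated to 0 and 0^-1 = 0. *)
Lemma sum_inv_sqr_subn_le v n : \sum_(i < n) (((i - v)%N)%:R ^+ 2)^-1 <= 61 / 36 :> R.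
Proof.
elim: v n => [|v IHv] n.
  rewrite (eq_bigr (fun i : 'I_n => (i%:R ^+ 2)^-1)) => [|i _]; last by rewrite subn0.
  apply: le_trans (le_trans _ (sum_inv_sqr_le n)) _.
    rewrite -addn4 big_split_ord /= lerDl.
    by apply: sumr_ge0 => i _; rewrite invr_ge0 sqr_ge0.
  by rewrite lerBlDr lerDl invr_ge0.
case: n => [|n]; first by rewrite big_ord0 divr_ge0.
by rewrite big_ord_recl sub0n expr0n invr0 add0r; apply: le_trans (IHv n).
Qed.

End InverseSquareSum.

Section CoefficientBound.
Context {R : realFieldType} {N k m v : nat} {W : R} {A P : {poly R}}.
Hypotheses (N_gt0 : (0 < N)%N) (size_P : (size P <= N.+1)%N).
Hypotheses (coef_P_le : forall i, `|P`_i| <= W) (coef_P_lt : forall i, (i < v)%N -> P`_i = 0).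
Hypotheses (P_eq : P = A * ('X - 1%:P) ^+ k) (m_le : (m.*2 <= k.+1)%N).

Let c : R := 2 / N%:R.
Let c_gt0 : 0 < c. Proof. by rewrite divr_gt0 ?ltr0n. Qed.

Definition test_poly := (cheb_sum m \Po (1 - c *: ('X - v%:R%:P))) ^+ 2.

Lemma horner_test_poly x : test_poly.[x] = (cheb_sum m).[1 - c * (x - v%:R)] ^+ 2.
Proof. by rewrite horner_exp horner_comp !hornerE. Qed.

Lemma size_test_poly : (size test_poly <= k)%N.
Proof.
have size_lin : size (1 - c *: ('X - v%:R%:P)) = 2.
  have size_cX : size (- (c *: ('X - v%:R%:P))) = 2.
    by rewrite size_polyN size_scale ?size_XsubC ?lt0r_neq0.
  by rewrite addrC size_polyDl size_cX // size_poly1.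
have size_comp : (size (cheb_sum m \Po (1 - c *: ('X - v%:R%:P))) <= m)%N.
  by rewrite size_comp_poly2 ?size_cheb_sum.
rewrite /test_poly expr2 (leq_trans (leq_size_polyM size_comp size_comp)) //; lia.
Qed.

Lemma test_poly_at_v : test_poly.[v%:R] = m%:R ^+ 4.
Proof. by rewrite horner_test_poly subrr mulr0 subr0 cheb_sum_1 -exprM. Qed.

Lemma test_poly_le i : (v < i <= N)%N ->
  test_poly.[i%:R] <= N%:R ^+ 2 * (((i - v)%N)%:R ^+ 2)^-1.
Proof.
move=> /andP[lt_vi le_iN].
have d_gt0 : 0 < ((i - v)%N)%:R :> R by rewrite ltr0n subn_gt0.
have d_leN : ((i - v)%N)%:R <= N%:R :> R by rewrite ler_nat; lia.
rewrite horner_test_poly -natrB 1?ltnW //.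
have s_range : 0 < c * ((i - v)%N)%:R <= 2.
  by rewrite mulr_gt0 //= /c mulrAC ler_pdivrMr ?ltr0n //; lra.
apply: le_trans (cheb_sum_sqr_le m _ s_range) _.
suff -> : 4 / (c * ((i - v)%N)%:R) ^+ 2 = N%:R ^+ 2 / ((i - v)%N)%:R ^+ 2 by [].
by rewrite /c; field; rewrite !lt0r_neq0 // ltr0n.
Qed.

Let W_ge0 : 0 <= W. Proof. exact: le_trans (normr_ge0 _) (coef_P_le 0). Qed.

Lemma coef_mul_test_poly_le i : i != v ->
  `|P`_i * test_poly.[i%:R]| <= W * N%:R ^+ 2 * (((i - v)%N)%:R ^+ 2)^-1.
Proof.
move=> neq_iv.
have rhs_ge0 : 0 <= W * N%:R ^+ 2 * (((i - v)%N)%:R ^+ 2)^-1.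
  by rewrite !mulr_ge0 ?invr_ge0 ?sqr_ge0.
have [P_i0 | P_i_neq0] := eqVneq P`_i 0; first by rewrite P_i0 mul0r normr0.
have lt_vi : (v < i)%N.
  by rewrite ltn_neqAle eq_sym neq_iv leqNgt; apply: contra P_i_neq0 => /coef_P_lt ->.
have le_iN : (i <= N)%N.
  rewrite -ltnS (leq_trans _ size_P) // ltnNge.
  by apply: contra P_i_neq0 => le_Pi; rewrite nth_default.
have q_ge0 : 0 <= test_poly.[i%:R] by rewrite horner_test_poly sqr_ge0.
rewrite normrM (ger0_norm q_ge0) -mulrA ler_pM //.
by apply: test_poly_le; rewrite lt_vi.
Qed.

Lemma coef_pairing_test_poly : coef_pairing (size A + k) P test_poly = 0.
Proof. by rewrite P_eq; apply: coef_pairing_mulXsubC_exp => //; exact: size_test_poly. Qed.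

Lemma test_poly_bound : m%:R ^+ 4 * `|P`_v| <= 61 / 36 * (W * N%:R ^+ 2).
Proof.
have [P_v0 | P_v_neq0] := eqVneq P`_v 0.
  by rewrite P_v0 normr0 mulr0 mulr_ge0 ?divr_ge0 ?mulr_ge0 ?sqr_ge0.
set M := (size A + k)%N.
have lt_vM : (v < M)%N.
  have size_PM : (size P <= M)%N.
    by rewrite P_eq (leq_trans (size_polyMleq _ _)) // size_exp_XsubC addnS.
  by rewrite ltnNge; apply: contra P_v_neq0 => le_Mv; rewrite nth_default // (leq_trans size_PM).
pose v' := Ordinal lt_vM.
have := coef_pairing_test_poly; rewrite /coef_pairing (bigD1 v') //= test_poly_at_v.
move/eqP; rewrite addr_eq0 => /eqP sum_eq.
have -> : m%:R ^+ 4 * `|P`_v| = `|\sum_(i < M | i != v') P`_i * test_poly.[i%:R]|.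
  by rewrite -[RHS]normrN -sum_eq normrM normrX normr_nat mulrC.
apply: le_trans (ler_norm_sum _ _ _) _.
have term_le (i : 'I_M) : i != v' ->
    `|P`_i * test_poly.[i%:R]| <= W * N%:R ^+ 2 * (((i - v)%N)%:R ^+ 2)^-1.
  move=> ne_iv'; apply: coef_mul_test_poly_le.
  by apply: contra ne_iv' => /eqP eq_iv; apply/eqP/val_inj.
apply: le_trans (ler_sum _ term_le) _.
rewrite -mulr_sumr mulrC ler_wpM2r ?mulr_ge0 ?sqr_ge0 //.
apply: le_trans (sum_inv_sqr_subn_le v M).
by rewrite [X in _ <= X](bigD1 v') //= subnn expr0n invr0 add0r.
Qed.

End CoefficientBound.

Lemma floor_bound_of_half_pow4 {R : archiRealFieldType} (k : nat) (s : R) : 0 <= s ->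
  ((k.+1)./2)%:R ^+ 4 <= 61 / 36 * s ^+ 4 -> k%:Z <= Num.floor (16 / 7 * s) + 4.
Proof.
set m := (k.+1)./2 => s_ge0 m_le; rewrite -lerBlDr floor_ge_int intrB /=.
rewrite leNgt; apply/negP => lt_s_k.
have le_k_2m : (k <= m.*2)%N.
  by rewrite /m; have := odd_double_half k.+1; have := leq_b1 (odd k.+1); lia.
have lt_s_m : 8 / 7 * s < m%:R.
  have : (k%:R : R) <= 2 * m%:R by rewrite -natrM mul2n ler_nat.
  lra.
have : (8 / 7 * s) ^+ 4 < m%:R ^+ 4 by rewrite ltrXn2r // mulr_ge0 ?divr_ge0.
have -> : (8 / 7 * s) ^+ 4 = 4096 / 2401 * s ^+ 4 by field.
have := exprn_ge0 4 s_ge0; lra.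
Qed.

Theorem lemma4p6 (R : realType) (N W : nat) (P : {poly int}) (k : nat) :
  (0 < N)%N -> (0 < W)%N ->
  P != 0 -> (size P <= N.+1)%N ->
  (forall i : nat, `|P`_i| <= W%:Z) ->
  root_of_order P 1 k ->
  (k%:Z <= Num.floor ((16 / 7 : R) * Num.sqrt (Num.sqrt (W%:R : R)) * Num.sqrt (N%:R : R)) + 4)%R.
Proof.
move=> N_gt0 _ P_neq0 size_P coef_P [Q [P_eq _]].
rewrite -mulrA; apply: floor_bound_of_half_pow4; first by rewrite mulr_ge0 ?sqrtr_ge0.
have -> : (Num.sqrt (Num.sqrt W%:R) * Num.sqrt N%:R) ^+ 4 = W%:R * N%:R ^+ 2 :> R.
  by rewrite exprMn -[4%N]/(2 * 2)%N !exprM !sqr_sqrtr ?sqrtr_ge0.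
have [|v P_v_neq0 v_min] := ex_minnP (P := fun i => P`_i != 0).
  by exists (size P).-1; rewrite -lead_coefE lead_coef_eq0.
pose PR : {poly R} := map_poly intr P.
have PR_eq : PR = map_poly intr Q * ('X - 1%:P) ^+ k.
  by rewrite /PR P_eq rmorphM rmorphXn /= map_polyXsubC rmorph1.
have size_PR : (size PR <= N.+1)%N by rewrite size_map_inj_poly //; exact: intr_inj.
have coef_PR_le i : `|PR`_i| <= W%:R.
  by rewrite coef_map -intr_norm -[W%:R]/((W%:Z)%:~R) ler_int.
have coef_PR_lt i : (i < v)%N -> PR`_i = 0.
  move=> lt_iv; rewrite coef_map (_ : P`_i = 0) //.
  by apply/eqP; apply: contraTT lt_iv => /v_min; rewrite -leqNgt.
have m_le : (((k.+1)./2).*2 <= k.+1)%N by rewrite halfK leq_subr.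
apply: le_trans (test_poly_bound N_gt0 size_PR coef_PR_le coef_PR_lt PR_eq m_le).
by rewrite ler_peMr ?exprn_ge0 // coef_map -intr_norm ler1z -gtz0_ge1 normr_gt0.
Qed.
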